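(* Let $m\le k\le n$ be positive integers, $\mathbf a_1,\dots,\mathbf a_n\in\mathbb R^m$. For a multiset $\mathcal R$ with support in $[n]$ let $f(\mathcal R)=[\det(\sum_{i\in\mathcal R}\mathbf a_i\mathbf a_i^\top)]^{1/m}$ (sum with multiplicity), and let $w^*=\max\{[\det(\sum_{i\in[n]}x_i\mathbf a_i\mathbf a_i^\top)]^{1/m}:\sum_ix_i=k,\ \mathbf x\in\mathbb Z_+^n\}$ be the optimal value of the $D$-optimal design problem with repetitions. Let $\hat{\mathbf x}\in\mathbb Q_+^n$ be a rational optimal solution of the relaxation $\max\{[\det(\sum_{i\in[n]}x_i\mathbf a_i\mathbf a_i^\top)]^{1/m}:\sum_ix_i=k,\ \mathbf x\in\mathbb R_+^n\}$. Let $\mathcal S$ be the random multiset obtained by $k$ independent draws from $[n]$, each equal to $i$ with probability $\hat x_i/k$. Let $q$ be a positive integer with $q\hat x_i\in\mathbb Z_+$ for all $i$, let $\mathcal A_q$ be a collection of $qk$ distinct items of which exactly $q\hat x_i$ carry label $i$, choose a uniformly random $k$-element subset of $\mathcal A_q$, and let $\mathcal S_q$ be the multiset of labels of the chosen items. Then $$\big(\mathbb E[(f(\mathcal S_q))^m]\big)^{1/m}\ge\big(\mathbb E[(f(\mathcal S))^m]\big)^{1/m}\ge g(m,k)^{-1}w^*,$$ where $$g(m,k)=\Big[\frac{(k-m)!\,k^m}{k!}\Big]^{1/m}\le\min\Big\{e,\ \frac{k}{k-m+1}\Big\}.$$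
   Context: $[n]=\{1,\dots,n\}$, $\mathbb Q_+$ the nonnegative rationals, $\mathbb Z_+$ the nonnegative integers, $\mathbb R_+$ the nonnegative reals. *)

From HB Require Import structures.
From mathcomp Require Import all_boot all_order all_algebra.
From mathcomp Require Import reals exp sequences.
Set Implicit Arguments. Unset Strict Implicit. Unset Printing Implicit Defensive.
Import Order.TTheory GRing.Theory Num.Theory.
Local Open Scope ring_scope.

Section Defs.
Variables (R : realType) (m n : nat).

Definition outer (v : 'cV[R]_m) : 'M[R]_m := v *m v^T.

(* f(R) = [det (sum_{i in R} a_i a_i^T)]^{1/m}, R a multiset given as a seq (with multiplicity) *)
Definition fdet (a : 'I_n -> 'cV[R]_m) (s : seq 'I_n) : R :=
  powR (\det (\sum_(i <- s) outer (a i))) (m%:R^-1).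

Definition design_obj (a : 'I_n -> 'cV[R]_m) (x : 'I_n -> R) : R :=
  powR (\det (\sum_(i < n) x i *: outer (a i))) (m%:R^-1).

(* w^* : maximum of the objective over x in Z_+^n with sum_i x_i = k
   (each coordinate then lies in {0..k}); the objective is >= 0, so the
   big max with default 0 is the true maximum. *)
Definition wstar (a : 'I_n -> 'cV[R]_m) (k : nat) : R :=
  \big[Num.max/0]_(x : {ffun 'I_n -> 'I_k.+1} | (\sum_i (x i : nat) == k)%N)
     design_obj a (fun i => (x i : nat)%:R).

(* E[(f(S))^m], S = k independent draws, each equal to i with prob xh_i / k *)
Definition E_indep (a : 'I_n -> 'cV[R]_m) (k : nat) (xh : 'I_n -> R) : R :=
  \sum_(s : {ffun 'I_k -> 'I_n})
     (\prod_(j < k) (xh (s j) / k%:R)) * (fdet a [seq s j | j <- enum 'I_k]) ^+ m.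

(* E[(f(S_q))^m], S_q = labels of a uniformly random k-subset of the qk items
   'I_(q*k) labelled by lab *)
Definition E_sub (a : 'I_n -> 'cV[R]_m) (k q : nat) (lab : 'I_(q * k) -> 'I_n) : R :=
  \sum_(T : {set 'I_(q * k)} | #|T| == k)
     ('C(q * k, k)%:R)^-1 * (fdet a [seq lab t | t <- enum T]) ^+ m.

Definition gmk (k : nat) : R :=
  powR (((k - m)`! * k ^ m)%:R / (k`!)%:R) (m%:R^-1).

End Defs.

From HB Require Import structures.
From mathcomp Require Import all_boot all_order all_algebra.
From mathcomp Require Import reals exp sequences.
From mathcomp Require Import fingroup perm zify ring.
Set Implicit Arguments. Unset Strict Implicit. Unset Printing Implicit Defensive.
Import Order.TTheory GRing.Theory Num.Theory.

(* Expanding a determinant row by row, det (\sum_j w_j v_j v_j^T) is the sum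
   over maps psi : [m] -> J of (\prod_r w_(psi r)) D(psi), where the mixed
   determinant D(psi) vanishes unless psi is injective; averaging over the
   permutations of the rows gives m! det (\sum_j w_j v_j v_j^T) =
   \sum_psi (\prod_r w_(psi r)) det(V_psi)^2 >= 0, so f(R)^m is the
   determinant itself.  Both expectations therefore only see injective psi.
   For k independent draws the m draws indexed by psi are again independent,
   so E[f(S)^m] = k^_m / k^m * det (\sum_i xh_i a_i a_i^T).  A uniform k-subset
   of the qk items contains m given items with probability
   C(qk-m, k-m) / C(qk, k) = k^_m / (qk)^_m >= k^_m / (qk)^m, and the labels
   sum to q times the same matrix, whence E[f(S_q)^m] >= E[f(S)^m].
   As g(m,k)^m = k^m / k^_m, the middle inequality is the optimality of xh,
   and the bounds on g come from (1 + 1/u)^u <= e, telescoped, and from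
   k - j >= k - m + 1 for j < m. *)

Lemma ffact_leq_expn n m : n ^_ m <= n ^ m.
Proof. by elim: m => // m IHm; rewrite ffactnSr expnSr leq_mul ?leq_subr. Qed.

Lemma expn_leq_ffact k m : m <= k -> (k - m + 1) ^ m <= k ^_ m.
Proof.
move=> le_mk; suff : forall j, j <= m -> (k - m + 1) ^ j <= k ^_ j by apply.
elim=> // j IHj lt_jm; rewrite ffactnSr expnSr leq_mul ?IHj ?(ltnW lt_jm) //; lia.
Qed.

Lemma bin_ffactC n k m : m <= k -> k <= n ->
  'C(n, k) * k ^_ m = 'C(n - m, k - m) * n ^_ m.
Proof.
move=> le_mk le_kn.
have fact_pos : 0 < (k - m)`! * (n - k)`! by rewrite muln_gt0 !fact_gt0.
apply/eqP; rewrite -(eqn_pmul2r fact_pos); apply/eqP.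
transitivity n`!; first by rewrite -(bin_fact le_kn) -(ffact_fact le_mk); ring.
have -> : n - k = (n - m) - (k - m) by lia.
rewrite -(ffact_fact (leq_trans le_mk le_kn)) -(@bin_fact (n - m) (k - m)); [ring | lia].
Qed.

Lemma card_supsets (I : finType) (B : {set I}) k : #|B| <= k ->
  #|[set T : {set I} | B \subset T & #|T| == k]| = 'C(#|I| - #|B|, k - #|B|).
Proof.
move=> le_Bk.
have setUDK (A : {set I}) : A \subset ~: B -> (B :|: A) :\: B = A.
  by rewrite setDUl setDv set0U setDE => /setIidPl.
have -> : [set T : {set I} | B \subset T & #|T| == k] =
    (setU B) @: [set A : {set I} | A \subset ~: B & #|A| == k - #|B|].
  apply/setP => T; rewrite inE; apply/andP/imsetP => [[sBT /eqP cardT]|].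
    exists (T :\: B); last by rewrite -{1}(setID T B) (setIidPr sBT).
    by rewrite inE subsetDr cardsDS // cardT eqxx.
  case=> A; rewrite inE => /andP[sAcB /eqP cardA] ->; split; first exact: subsetUl.
  have /eqP disjBA : B :&: A == set0 by rewrite setI_eq0 disjoint_sym disjoints_subset.
  by rewrite cardsU cardA disjBA cards0; apply/eqP; lia.
rewrite card_in_imset => [|A1 A2].
  by rewrite cards_draws (cardsCs B) subKn // max_card.
by rewrite !inE => /andP[sA1 _] /andP[sA2 _] eqU; rewrite -(setUDK _ sA1) eqU setUDK.
Qed.

Local Open Scope ring_scope.

Section RowExpansion.
Variables (R : comPzRingType) (m : nat).

Lemma det_sum (J : finType) (N : J -> 'M[R]_m) :
  \det (\sum_j N j) =
  \sum_(phi : {ffun 'I_m -> J}) \det (\matrix_(r, c) N (phi r) r c).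
Proof.
rewrite /determinant.
under eq_bigr => s _.
  under eq_bigr => i _ do rewrite summxE.
  rewrite bigA_distr_bigA mulr_sumr.
  over.
rewrite exchange_big /=; apply: eq_bigr => phi _.
by apply: eq_bigr => s _; congr (_ * _); apply: eq_bigr => i _; rewrite mxE.
Qed.

Lemma det_scale_rows (d : 'I_m -> R) (A : 'M[R]_m) :
  \det (\matrix_(r, c) (d r * A r c)) = (\prod_r d r) * \det A.
Proof.
rewrite /determinant mulr_sumr; apply: eq_bigr => s _.
by rewrite mulrCA -big_split; congr (_ * _); apply: eq_bigr => i _; rewrite mxE.
Qed.

End RowExpansion.

Section OuterProducts.
Variables (R : comPzRingType) (m : nat) (J : finType) (v : J -> 'cV[R]_m).

Definition rows_mx (psi : {ffun 'I_m -> J}) : 'M[R]_m :=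
  \matrix_(r, c) v (psi r) c 0.

(* The determinant of the matrix whose [r]-th row is the [r]-th row of
   [v (psi r) *m (v (psi r))^T]. *)
Definition mixed_det (psi : {ffun 'I_m -> J}) : R :=
  (\prod_r v (psi r) r 0) * \det (rows_mx psi).

Lemma det_sum_outer (w : J -> R) :
  \det (\sum_j w j *: (v j *m (v j)^T)) =
  \sum_(psi : {ffun 'I_m -> J}) (\prod_r w (psi r)) * mixed_det psi.
Proof.
rewrite det_sum; apply: eq_bigr => psi _.
rewrite mulrA -big_split -det_scale_rows; congr (\det _); apply/matrixP => r c.
by rewrite !mxE big_ord1 !mxE mulrA.
Qed.

Lemma mixed_det_eq0 (psi : {ffun 'I_m -> J}) : ~~ injectiveb psi -> mixed_det psi = 0.
Proof.
case/injectivePn => r1 [r2 ne_r eq_psi].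
by rewrite /mixed_det (determinant_alternate ne_r) ?mulr0 // => c; rewrite !mxE eq_psi.
Qed.

Lemma mixed_det_perm (psi : {ffun 'I_m -> J}) (s : 'S_m) :
  mixed_det [ffun r => psi (s r)] =
  (\prod_r v (psi (s r)) r 0) * ((-1) ^+ s * \det (rows_mx psi)).
Proof.
rewrite /mixed_det; under eq_bigr do rewrite ffunE.
have -> : rows_mx [ffun r => psi (s r)] = row_perm s (rows_mx psi).
  by apply/matrixP => r c; rewrite !mxE ffunE.
by rewrite row_permE det_mulmx det_perm.
Qed.

Lemma det_sum_outer_sqr (w : J -> R) :
  m`!%:R * \det (\sum_j w j *: (v j *m (v j)^T)) =
  \sum_(psi : {ffun 'I_m -> J}) (\prod_r w (psi r)) * \det (rows_mx psi) ^+ 2.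
Proof.
have perm_ffun_inj (s : 'S_m) :
    injective (fun psi : {ffun 'I_m -> J} => [ffun r => psi (s r)]).
  move=> psi1 psi2 /ffunP eq_psi; apply/ffunP => r.
  by have := eq_psi ((s^-1)%g r); rewrite !ffunE permKV.
rewrite det_sum_outer -card_Sn mulr_natl -sumr_const.
transitivity (\sum_(s : 'S_m) \sum_(psi : {ffun 'I_m -> J})
    (\prod_r w (psi r)) * mixed_det [ffun r => psi (s r)]).
  apply: eq_bigr => s _; rewrite (reindex_inj (perm_ffun_inj s)).
  apply: eq_bigr => psi _ /=; congr (_ * _).
  by rewrite [RHS](reindex_inj (@perm_inj _ s)); apply: eq_bigr => r _; rewrite ffunE.
rewrite exchange_big; apply: eq_bigr => psi _ /=.
have det_rows_tr : \det (rows_mx psi) =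
    \sum_(s : 'S_m) (-1) ^+ s * \prod_r v (psi (s r)) r 0.
  rewrite -det_tr; apply: eq_bigr => s _; congr (_ * _).
  by apply: eq_bigr => r _; rewrite !mxE.
rewrite -mulr_sumr expr2 {1}det_rows_tr mulr_suml; congr (_ * _).
by apply: eq_bigr => s _; rewrite mixed_det_perm mulrA [_ * (-1) ^+ s]mulrC.
Qed.

End OuterProducts.

Lemma mixed_det_comp (R : comPzRingType) m (J K : finType) (v : J -> 'cV[R]_m)
    (b : K -> J) (phi : {ffun 'I_m -> K}) :
  mixed_det (fun t => v (b t)) phi = mixed_det v [ffun r => b (phi r)].
Proof.
rewrite /mixed_det; congr (_ * _); first by apply: eq_bigr => r _; rewrite ffunE.
by congr (\det _); apply/matrixP => r c; rewrite !mxE ffunE.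
Qed.

Lemma comp_ffun_injectiveN (I J K : finType) (b : J -> K) (phi : {ffun I -> J}) :
  ~~ injectiveb phi -> ~~ injectiveb [ffun r => b (phi r)].
Proof.
case/injectivePn => r1 [r2 ne_r eq_phi]; apply/injectivePn.
by exists r1, r2; rewrite // !ffunE eq_phi.
Qed.

Lemma det_sum_outer_ge0 (R : realDomainType) m (J : finType)
    (v : J -> 'cV[R]_m) (w : J -> R) :
  (forall j, 0 <= w j) -> 0 <= \det (\sum_j w j *: (v j *m (v j)^T)).
Proof.
move=> w_ge0; rewrite -(pmulr_rge0 _ (_ : 0 < m`!%:R)) ?ltr0n ?fact_gt0 //.
rewrite det_sum_outer_sqr; apply: sumr_ge0 => psi _.
by rewrite mulr_ge0 ?sqr_ge0 // prodr_ge0.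
Qed.

Section ProductMeasure.
Variables (R : comPzSemiRingType) (I : finType) (p : I -> R).
Hypothesis p_sum1 : \sum_i p i = 1.
Variables (k m : nat) (phi : 'I_m -> 'I_k).
Hypothesis phi_inj : injective phi.

Lemma sum_prod_fiber (psi : {ffun 'I_m -> I}) :
  \sum_(s : {ffun 'I_k -> I} | [ffun r => s (phi r)] == psi) \prod_j p (s j) =
  \prod_r p (psi r).
Proof.
pose Q j i := [forall r, (phi r == j) ==> (i == psi r)].
have Q_phi r : Q (phi r) =1 pred1 (psi r).
  move=> i; apply/forallP/eqP => [/(_ r)|-> r']; first by rewrite eqxx => /eqP.
  by apply/implyP => /eqP/phi_inj ->.
have Q_out j : j \notin phi @: setT -> Q j =1 predT.
  move=> j_out i; apply/forallP => r; apply/implyP => /eqP phi_r.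
  by rewrite -phi_r imset_f ?inE in j_out.
transitivity (\prod_j \sum_(i | Q j i) p i).
  rewrite bigA_distr_big_dep; apply: eq_bigl => s.
  apply/eqP/familyP => [eq_s j|Qs].
    by apply/forallP => r; apply/implyP => /eqP <-; rewrite -eq_s ffunE.
  apply/ffunP => r; rewrite ffunE; have : Q (phi r) (s (phi r)) := Qs (phi r).
  by rewrite Q_phi => /eqP.
rewrite (bigID (mem (phi @: setT))) /= [X in _ * X]big1 => [|j /Q_out Qj].
  rewrite mulr1 big_imset /=; last by move=> r1 r2 _ _ /phi_inj.
  by apply: eq_big => r; rewrite ?inE // => _; rewrite (eq_bigl _ _ (Q_phi r)) big_pred1_eq.
by rewrite (eq_bigl _ _ Qj).
Qed.

Lemma sum_prod_comp (F : {ffun 'I_m -> I} -> R) :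
  \sum_(s : {ffun 'I_k -> I}) (\prod_j p (s j)) * F [ffun r => s (phi r)] =
  \sum_(psi : {ffun 'I_m -> I}) (\prod_r p (psi r)) * F psi.
Proof.
rewrite (partition_big (fun s : {ffun 'I_k -> I} => [ffun r => s (phi r)]) xpredT) //=.
apply: eq_bigr => psi _; rewrite -sum_prod_fiber mulr_suml.
by apply: eq_bigr => s /eqP ->.
Qed.

End ProductMeasure.

Lemma sum_prod_mem_card (R : pzSemiRingType) (I : finType) m k (phi : 'I_m -> I) :
  injective phi -> (m <= k)%N ->
  \sum_(T : {set I} | #|T| == k) \prod_r (phi r \in T)%:R =
  'C(#|I| - m, k - m)%:R :> R.
Proof.
move=> phi_inj le_mk; set B := phi @: setT.
have card_B : #|B| = m by rewrite card_imset // cardsT card_ord.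
have prod_mem (T : {set I}) : \prod_r (phi r \in T)%:R = (B \subset T)%:R :> R.
  case: (boolP (B \subset T)) => [sBT | /subsetPn[_ /imsetP[r _ ->] phi_r_out]].
    by apply: big1 => r _; rewrite (subsetP sBT) ?imset_f ?inE.
  by rewrite -natr_prod (bigD1 r) //= (negbTE phi_r_out).
rewrite (eq_bigr (fun T : {set I} => if B \subset T then 1 else 0 : R)) => [|T _].
  rewrite -big_mkcondr /= sumr_const -card_B -card_supsets ?card_B //.
  by congr (_ *+ _); apply: eq_card => T; rewrite !inE andbC.
by rewrite prod_mem; case: (B \subset T).
Qed.

Lemma sum_comp_card_fiber (V : nmodType) (I K : finType) (b : K -> I) (F : I -> V) :
  \sum_t F (b t) = \sum_i F i *+ #|[set t | b t == i]|.
Proof.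
rewrite (partition_big b xpredT) //=; apply: eq_bigr => i _.
rewrite (eq_bigr (fun=> F i)) => [|t /eqP -> //].
by rewrite sumr_const; congr (_ *+ _); apply: eq_card => t; rewrite inE.
Qed.

Section PowR.
Variables (R : realType) (n : nat).
Hypothesis n_gt0 : (0 < n)%N.

Lemma powR_invnK (x : R) : 0 <= x -> powR x n%:R^-1 ^+ n = x.
Proof.
move=> x_ge0; rewrite -powR_mulrn ?powR_ge0 // -powRrM mulVf ?powRr1 //.
by rewrite pnatr_eq0 -lt0n.
Qed.

Lemma exprnK_powR (x : R) : 0 <= x -> powR (x ^+ n) n%:R^-1 = x.
Proof.
move=> x_ge0; rewrite -powR_mulrn // -powRrM mulfV ?powRr1 //.
by rewrite pnatr_eq0 -lt0n.
Qed.

Lemma powR_invn_le (x y : R) : 0 <= x -> 0 <= y -> x <= y ^+ n -> powR x n%:R^-1 <= y.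
Proof.
move=> x_ge0 y_ge0 le_xy; rewrite -(exprnK_powR y_ge0).
by apply: ge0_ler_powR; rewrite ?nnegrE ?invr_ge0 ?ler0n ?exprn_ge0.
Qed.

End PowR.

Section DesignExpectations.
Variables (R : realType) (m n : nat) (a : 'I_n -> 'cV[R]_m).
Hypothesis m_gt0 : (0 < m)%N.

Lemma det_sum_outer_labels (K : finType) (b : K -> 'I_n) (w : K -> R) :
  \det (\sum_t w t *: outer (a (b t))) =
  \sum_(phi : {ffun 'I_m -> K}) (\prod_r w (phi r)) * mixed_det a [ffun r => b (phi r)].
Proof.
by rewrite (det_sum_outer (fun t => a (b t))); under eq_bigr do rewrite mixed_det_comp.
Qed.

Lemma det_sum_outer_labels1 (K : finType) (b : K -> 'I_n) :
  \det (\sum_t outer (a (b t))) =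
  \sum_(phi : {ffun 'I_m -> K}) mixed_det a [ffun r => b (phi r)].
Proof.
under eq_bigr do rewrite -[outer _]scale1r.
by rewrite det_sum_outer_labels; apply: eq_bigr => phi _; rewrite big1 ?mul1r.
Qed.

Lemma fdet_expr (s : seq 'I_n) : fdet a s ^+ m = \det (\sum_(i <- s) outer (a i)).
Proof.
rewrite powR_invnK // big_tnth.
under eq_bigr do rewrite -[outer _]scale1r.
by apply: det_sum_outer_ge0 => j; apply: ler01.
Qed.

Lemma E_indepE k (x : 'I_n -> R) : (0 < k)%N -> \sum_i x i = k%:R ->
  E_indep a k x = (k ^_ m)%:R / k%:R ^+ m * \det (\sum_i x i *: outer (a i)).
Proof.
move=> k_gt0 x_sum; pose p i := x i / k%:R.
have k_neq0 : k%:R != 0 :> R by rewrite pnatr_eq0 -lt0n.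
have p_sum1 : \sum_i p i = 1 by rewrite -mulr_suml x_sum mulfV.
have fdet_draws (s : {ffun 'I_k -> 'I_n}) :
    fdet a [seq s j | j <- enum 'I_k] ^+ m =
    \sum_(phi : {ffun 'I_m -> 'I_k}) mixed_det a [ffun r => s (phi r)].
  by rewrite fdet_expr big_map big_enum det_sum_outer_labels1.
transitivity (\sum_(phi : {ffun 'I_m -> 'I_k} | injectiveb phi)
                \det (\sum_i p i *: outer (a i))).
  rewrite /E_indep; under eq_bigr do rewrite fdet_draws mulr_sumr.
  rewrite exchange_big /= (bigID (fun phi : {ffun 'I_m -> 'I_k} => injectiveb phi)) /=.
  rewrite [X in _ + X]big1 ?addr0 => [|phi /comp_ffun_injectiveN ninj]; last first.
    by apply: big1 => s _; rewrite mixed_det_eq0 ?mulr0 ?ninj.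
  apply: eq_bigr => phi /injectiveP phi_inj.
  by rewrite (sum_prod_comp p_sum1 phi_inj) det_sum_outer.
rewrite sumr_const (_ : #|_| = k ^_ m); last first.
  rewrite -[k in RHS]card_ord -[m in RHS]card_ord -card_inj_ffuns.
  by apply: eq_card => phi; rewrite inE.
have -> : \sum_i p i *: outer (a i) = k%:R^-1 *: \sum_i x i *: outer (a i).
  by rewrite scaler_sumr; apply: eq_bigr => i _; rewrite scalerA mulrC.
by rewrite detZ exprVn -mulrnAl -mulr_natl.
Qed.

Lemma E_subE k q (lab : 'I_(q * k) -> 'I_n) : (m <= k)%N ->
  @E_sub R m n a k q lab =
  'C(q * k - m, k - m)%:R / 'C(q * k, k)%:R * \det (\sum_t outer (a (lab t))).
Proof.
move=> le_mk.
have fdet_subset (T : {set 'I_(q * k)}) :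
    fdet a [seq lab t | t <- enum T] ^+ m =
    \sum_(phi : {ffun 'I_m -> 'I_(q * k)})
      (\prod_r (phi r \in T)%:R) * mixed_det a [ffun r => lab (phi r)].
  rewrite fdet_expr big_map big_enum /= big_mkcond /=.
  rewrite -(det_sum_outer_labels lab (fun t => (t \in T)%:R)).
  by congr (\det _); apply: eq_bigr => t _; case: (t \in T); rewrite ?scale1r ?scale0r.
rewrite /E_sub -mulr_sumr [RHS]mulrAC [RHS]mulrC; congr (_ * _).
under eq_bigr do rewrite fdet_subset.
rewrite exchange_big det_sum_outer_labels1 mulr_sumr; apply: eq_bigr => phi _ /=.
rewrite -mulr_suml; have [/injectiveP phi_inj | ninj] := boolP (injectiveb phi).
  by rewrite sum_prod_mem_card // card_ord.
by rewrite mixed_det_eq0 ?mulr0 ?comp_ffun_injectiveN.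
Qed.

End DesignExpectations.

Lemma wstar_le (R : realType) m n (a : 'I_n -> 'cV[R]_m) k (c : R) : 0 <= c ->
  (forall x : 'I_n -> R, (forall i, 0 <= x i) -> \sum_i x i = k%:R ->
     design_obj a x <= c) ->
  wstar a k <= c.
Proof.
move=> c_ge0 obj_le; apply: (big_ind (fun y => y <= c)) => // [y z|x /eqP x_sum].
  by rewrite ge_max => ->.
by apply: obj_le => [i|]; rewrite ?ler0n // -natr_sum x_sum.
Qed.

Lemma ffact_ratio_le_bin_ratio (R : realType) m k q :
  (0 < q)%N -> (0 < k)%N -> (m <= k)%N ->
  (k ^_ m)%:R / k%:R ^+ m <=
  'C(q * k - m, k - m)%:R / 'C(q * k, k)%:R * q%:R ^+ m :> R.
Proof.
move=> q_gt0 k_gt0 le_mk; have le_k_qk : (k <= q * k)%N by rewrite leq_pmull.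
rewrite mulrAC ler_pdivlMr ?ltr0n ?bin_gt0 // mulrAC ler_pdivrMr ?exprn_gt0 ?ltr0n //.
rewrite -!natrX -!natrM ler_nat mulnC bin_ffactC // -mulnA -expnMn.
by rewrite leq_mul ?ffact_leq_expn.
Qed.

Section ExpBounds.
Variable R : realType.

Lemma expSn_le_expR1 u : (u.+1%:R : R) ^+ u <= expR 1 * u%:R ^+ u.
Proof.
case: u => [|u]; first by rewrite !expr0 mulr1 (le_trans _ (expR_ge1Dx 1)) // lerDl.
have u_gt0 : (0 : R) < u.+1%:R by rewrite ltr0n.
have -> : (u.+2%:R : R) = u.+1%:R * (1 + u.+1%:R^-1).
  by rewrite mulrDr mulr1 mulfV ?lt0r_neq0 // -natr1 addrC.
rewrite exprMn mulrC ler_pM2r ?exprn_gt0 //.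
have -> : expR 1 = expR (u.+1%:R^-1) ^+ u.+1 :> R.
  by rewrite -expRM_natr mulVf ?lt0r_neq0.
by apply: lerXn2r; rewrite ?nnegrE ?addr_ge0 ?invr_ge0 ?ler0n ?expR_ge0 ?expR_ge1Dx.
Qed.

Lemma ffact_expR1 k m : (m <= k)%N -> (k%:R : R) ^+ m <= expR 1 ^+ m * (k ^_ m)%:R.
Proof.
move=> le_mk.
have tail_bound j : (j <= k)%N ->
    (k%:R : R) ^+ k <= expR 1 ^+ j * (k ^_ j)%:R * (k - j)%:R ^+ (k - j).
  elim: j => [|j IHj] lt_jk; first by rewrite expr0 mul1r ffactn0 mul1r subn0.
  apply: (le_trans (IHj (ltnW lt_jk))).
  rewrite ffactnSr; set t := (k - j.+1)%N; have -> : (k - j = t.+1)%N by lia.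
  have -> : expR 1 ^+ j.+1 * (k ^_ j * t.+1)%:R * t%:R ^+ t =
      expR 1 ^+ j * (k ^_ j)%:R * t.+1%:R * (expR 1 * t%:R ^+ t) :> R.
    by rewrite exprS natrM; ring.
  rewrite exprS mulrA ler_wpM2l ?expSn_le_expR1 //.
  by rewrite !mulr_ge0 ?exprn_ge0 ?expR_ge0.
have dd_gt0 : (0 : R) < (k - m)%:R ^+ (k - m).
  by rewrite -natrX ltr0n expn_gt0 orbC; case: (k - m)%N.
rewrite -(ler_pM2r dd_gt0); apply: le_trans (tail_bound m le_mk).
have -> : k%:R ^+ k = k%:R ^+ m * k%:R ^+ (k - m) :> R by rewrite -exprD subnKC.
rewrite ler_wpM2l ?exprn_ge0 //.
by apply: lerXn2r; rewrite ?nnegrE ?ler0n // ler_nat leq_subr.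
Qed.

End ExpBounds.

Lemma powRV (R : realType) (x r : R) : 0 <= x -> powR x^-1 r = (powR x r)^-1.
Proof. by move=> x_ge0; rewrite -powR_inv1 // powRAC powR_inv1 ?powR_ge0. Qed.

Section Gmk.
Variables (R : realType) (m k : nat).
Hypotheses (m_gt0 : (0 < m)%N) (le_mk : (m <= k)%N).

Lemma gmkE : gmk R m k = powR (k%:R ^+ m / (k ^_ m)%:R) m%:R^-1.
Proof.
rewrite /gmk -(ffact_fact le_mk) !natrM natrX; congr (powR _ _).
have fact_neq0 : ((k - m)`!)%:R != 0 :> R by rewrite pnatr_eq0 -lt0n fact_gt0.
have ffact_neq0 : (k ^_ m)%:R != 0 :> R by rewrite pnatr_eq0 -lt0n ffact_gt0.
by field; rewrite ffact_neq0 fact_neq0.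
Qed.

Lemma gmk_le_expR1 : gmk R m k <= expR 1.
Proof.
rewrite gmkE powR_invn_le ?expR_ge0 ?divr_ge0 ?exprn_ge0 ?ler0n //.
by rewrite ler_pdivrMr ?ltr0n ?ffact_gt0 // ffact_expR1.
Qed.

Lemma gmk_le_ratio : gmk R m k <= k%:R / (k - m + 1)%N%:R.
Proof.
rewrite gmkE powR_invn_le ?divr_ge0 ?exprn_ge0 ?ler0n // expr_div_n.
rewrite ler_pdivrMr ?ltr0n ?ffact_gt0 // mulrAC ler_pdivlMr ?exprn_gt0 ?ltr0n ?addn1 //.
by rewrite ler_wpM2l ?exprn_ge0 ?ler0n // -natrX ler_nat -addn1 expn_leq_ffact.
Qed.

End Gmk.

Theorem proposition4 (R : realType) (m k n : nat)
  (a : 'I_n -> 'cV[R]_m) (xh : 'I_n -> rat) (q : nat)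
  (lab : 'I_(q * k) -> 'I_n) :
  (0 < m)%N -> (m <= k)%N -> (k <= n)%N ->
  (* xh is a rational optimal solution of the continuous relaxation *)
  (forall i, 0 <= xh i) ->
  \sum_i xh i = k%:R ->
  (forall x : 'I_n -> R, (forall i, 0 <= x i) -> \sum_i x i = k%:R ->
     design_obj a x <= design_obj a (fun i => ratr (xh i))) ->
  (* q is a positive integer with q * xh_i in Z_+ *)
  (0 < q)%N ->
  (forall i, exists c : nat, q%:R * xh i = c%:R) ->
  (* A_q : qk distinct items, exactly q * xh_i of which carry label i *)
  (forall i, (#|[set t | lab t == i]|)%:R = q%:R * xh i) ->
  let EQ := @E_sub R m n a k q lab in
  let E := E_indep a k (fun i => ratr (xh i)) in
  powR EQ (m%:R^-1) >= powR E (m%:R^-1) /\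
  powR E (m%:R^-1) >= (gmk R m k)^-1 * wstar a k /\
  gmk R m k <= Num.min (expR 1) (k%:R / (k - m + 1)%N%:R).
Proof.
move=> m_gt0 le_mk _ xh_ge0 xh_sum xh_opt q_gt0 _ card_lab EQ E.
have k_gt0 : (0 < k)%N := leq_trans m_gt0 le_mk.
pose x i : R := ratr (xh i); pose M := \sum_i x i *: outer (a i).
have x_ge0 i : 0 <= x i by rewrite ler0q xh_ge0.
have detM_ge0 : 0 <= \det M := det_sum_outer_ge0 a x_ge0.
have E_val : E = (k ^_ m)%:R / k%:R ^+ m * \det M.
  by apply: E_indepE; rewrite // -rmorph_sum xh_sum rmorph_nat.
have EQ_val : EQ = 'C(q * k - m, k - m)%:R / 'C(q * k, k)%:R * q%:R ^+ m * \det M.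
  rewrite /EQ E_subE // -[RHS]mulrA -detZ scaler_sumr.
  rewrite (sum_comp_card_fiber lab (fun i => outer (a i))).
  congr (_ * \det _); apply: eq_bigr => i _.
  rewrite -scaler_nat -(ratr_nat R #|[set t | lab t == i]|) card_lab.
  by rewrite rmorphM rmorph_nat scalerA.
have ratio_ge0 : 0 <= (k ^_ m)%:R / k%:R ^+ m :> R by rewrite divr_ge0 ?exprn_ge0.
split; [|split].
- have le_E_EQ : E <= EQ by rewrite E_val EQ_val ler_wpM2r // ffact_ratio_le_bin_ratio.
  have E_ge0 : 0 <= E by rewrite E_val mulr_ge0.
  by apply: ge0_ler_powR; rewrite ?nnegrE ?invr_ge0 ?ler0n // (le_trans E_ge0).
- rewrite E_val powRM // gmkE // -powRV ?divr_ge0 ?exprn_ge0 // invf_div.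
  by rewrite ler_wpM2l ?powR_ge0 // (wstar_le (powR_ge0 _ _) xh_opt).
- by rewrite le_min gmk_le_expR1 // gmk_le_ratio.
Qed.
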